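(* If $U(x)$ is a polynomial with non-negative coefficients, then the function $V(x)=x(1+xU(x))$ is the covariance of some power series distribution.
   Context: For a power series $\omega(y)=\sum_k a_ky^k$ with non-negative coefficients and positive radius of convergence, the power series distribution (PSD) of $\omega$ with parameter $y>0$ is the law on $\{0,1,2,\dots\}$ given by $P\{\xi=k\}=a_ky^k/\omega(y)$. Its mean is $x(y)=y\omega'(y)/\omega(y)$ and its variance is $y\,x'(y)>0$, so $x(\cdot)$ has an inverse $y=f(x)$ on its range. The covariance of the PSD of $\omega$ is the function $V(x)=f(x)/f'(x)$, i.e. the variance expressed as a function of the mean $x$; a function is ''the covariance of a PSD'' if it equals this for some such $\omega$. *)

From Stdlib Require Import Reals.
From Coquelicot Require Import Coquelicot.
Open Scope R_scope.

Definition psd_omega (a : nat -> R) (y : R) : R := Series (fun k => a k * y ^ k).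

Definition psd_prob (a : nat -> R) (y : R) (k : nat) : R := a k * y ^ k / psd_omega a y.

Definition psd_mean (a : nat -> R) (y : R) : R :=
  Series (fun k => INR k * psd_prob a y k).

Definition psd_var (a : nat -> R) (y : R) : R :=
  Series (fun k => (INR k - psd_mean a y) ^ 2 * psd_prob a y k).

(* admissible power series: non-negative coefficients, positive radius of
   convergence, non-degenerate (at least two non-zero coefficients, so that the
   variance y x'(y) is > 0 and the mean map is invertible). *)
Definition psd_generator (a : nat -> R) : Prop :=
  (forall k, 0 <= a k) /\ Rbar_lt 0 (CV_radius a) /\
  (exists i j : nat, i <> j /\ 0 < a i /\ 0 < a j).

(* V is the covariance of the PSD of omega: the variance expressed as a function
   of the mean, i.e. V(x(y)) = Var_y for every parameter y in (0, radius). *)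
Definition is_psd_covariance (V : R -> R) : Prop :=
  exists a : nat -> R, psd_generator a /\
    forall y : R, 0 < y -> Rbar_lt y (CV_radius a) ->
      V (psd_mean a y) = psd_var a y.

Definition poly_eval (c : nat -> R) (n : nat) (x : R) : R :=
  sum_f_R0 (fun i => c i * x ^ i) n.

(* Let B(y) = sum_k b_k y^k be the mean of the distribution as a function of the parameter.
   Since the variance is y B'(y), the requirement V(B(y)) = y B'(y) with B(y) = y + O(y^2)
   gives k b_k = b_k + [y^k] B^2 U(B), a recursion for b_k in terms of earlier coefficients
   with non-negative right-hand side; the weights of the distribution are then the
   coefficients a_k of w = exp (int B(y)/y dy), i.e. k a_k = (b * a)_k, a_0 = 1, again
   non-negative.  Both series have a positive radius of convergence thanks to the majorant
   A^(k-1) / k^2, which is (up to the factor 8 / A) stable under Cauchy products because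
   sum_(0<j<k) 1 / (j^2 (k-j)^2) <= 8 / k^2. *)

From Stdlib Require Import Reals Arith Lra Lia.
From Coquelicot Require Import Coquelicot.
Open Scope R_scope.

Section StrongRecursion.

Variable Phi : (nat -> R) -> nat -> R.

Definition causal : Prop :=
  forall f g k, (forall j, (j < k)%nat -> f j = g j) -> Phi f k = Phi g k.

(* For causal [Phi], the [k+1]-st iterate from [0] is already exact up to index [k]. *)
Definition strong_rec (k : nat) : R := Nat.iter (S k) Phi (fun _ => 0) k.

Hypothesis Phi_causal : causal.

Lemma iter_causal_stable N M j : (j < N)%nat -> (N <= M)%nat ->
  Nat.iter N Phi (fun _ => 0) j = Nat.iter M Phi (fun _ => 0) j.
Proof.
  revert M j; induction N as [|N IH]; intros [|M] j Hj HNM; try lia.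
  change (Phi (Nat.iter N Phi (fun _ => 0)) j = Phi (Nat.iter M Phi (fun _ => 0)) j).
  apply Phi_causal; intros i Hi; apply IH; lia.
Qed.

Lemma strong_recE k : strong_rec k = Phi strong_rec k.
Proof.
  change (Phi (Nat.iter k Phi (fun _ => 0)) k = Phi strong_rec k).
  apply Phi_causal; intros j Hj.
  symmetry; apply iter_causal_stable; lia.
Qed.

Lemma strong_rec_ind (P : nat -> R -> Prop) :
  (forall f k, (forall j, (j < k)%nat -> P j (f j)) -> P k (Phi f k)) ->
  forall k, P k (strong_rec k).
Proof.
  intros HP k; induction k as [k IH] using lt_wf_ind.
  rewrite strong_recE; apply HP, IH.
Qed.

End StrongRecursion.

Definition PS_unit (k : nat) : R := if Nat.eqb k 0 then 1 else 0.

Fixpoint PS_pow (f : nat -> R) (m : nat) : nat -> R :=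
  match m with
  | O => PS_unit
  | S m => PS_mult f (PS_pow f m)
  end.

Lemma PS_pow_1 f k : PS_pow f 1 k = f k.
Proof.
  unfold PS_pow, PS_mult, PS_unit; destruct k as [|k]; [simpl; ring|].
  rewrite tech5, Nat.sub_diag, sum_eq_R0; [simpl; ring|].
  intros j Hj; destruct (Nat.eqb_spec (S k - j) 0); [lia | ring].
Qed.

Lemma PS_pow_lt f m k : f 0%nat = 0 -> (k < m)%nat -> PS_pow f m k = 0.
Proof.
  intros f0; revert k; induction m as [|m IH]; intros k Hk; [lia|].
  apply sum_eq_R0; intros [|j] Hj; [rewrite f0; ring|].
  rewrite IH by lia; ring.
Qed.

Lemma PS_pow_ext_le f g m l :
  (forall j, (j <= l)%nat -> f j = g j) -> PS_pow f m l = PS_pow g m l.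
Proof.
  revert l; induction m as [|m IH]; intros l Hfg; [reflexivity|].
  change (PS_mult f (PS_pow f m) l = PS_mult g (PS_pow g m) l).
  apply sum_eq; intros j Hj.
  rewrite (Hfg j Hj), (IH (l - j)%nat) by (intros; apply Hfg; lia).
  reflexivity.
Qed.

(* With [f 0 = 0], the term [f k * (f^(m+1))_0] of [(f^(m+2))_k] vanishes. *)
Lemma PS_pow_SS_ext_lt f g m k : f 0%nat = 0 -> g 0%nat = 0 ->
  (forall j, (j < k)%nat -> f j = g j) ->
  PS_pow f (S (S m)) k = PS_pow g (S (S m)) k.
Proof.
  intros f0 g0 Hfg.
  change (PS_mult f (PS_pow f (S m)) k = PS_mult g (PS_pow g (S m)) k).
  apply sum_eq; intros [|j] Hj; [rewrite f0, g0; ring|].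
  destruct (Nat.eq_dec (S j) k) as [<-|Hjk].
  - rewrite Nat.sub_diag, !(PS_pow_lt _ (S m)) by (assumption || lia); ring.
  - rewrite (Hfg (S j)) by lia.
    rewrite (PS_pow_ext_le f g) by (intros; apply Hfg; lia).
    reflexivity.
Qed.

Lemma PS_mult_le_compat f f' g g' k :
  (forall j, 0 <= f j <= f' j) -> (forall j, 0 <= g j <= g' j) ->
  0 <= PS_mult f g k <= PS_mult f' g' k.
Proof.
  intros Hf Hg; split.
  - apply cond_pos_sum; intro j; apply Rmult_le_pos; [apply Hf | apply Hg].
  - apply sum_Rle; intros j _; apply Rmult_le_compat; apply Hf || apply Hg.
Qed.

Lemma PS_pow_le_compat f g m k :
  (forall j, 0 <= f j <= g j) -> 0 <= PS_pow f m k <= PS_pow g m k.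
Proof.
  intro Hfg; revert k; induction m as [|m IH]; intro k.
  - unfold PS_pow, PS_unit; destruct (Nat.eqb k 0); lra.
  - apply PS_mult_le_compat; assumption.
Qed.

Lemma PS_mult_scal_r f g C k :
  PS_mult f (fun j => C * g j) k = C * PS_mult f g k.
Proof. unfold PS_mult; rewrite scal_sum; apply sum_eq; intros; ring. Qed.

Lemma PS_pow_le_submult h r m k : (forall j, 0 <= h j) -> 0 <= r ->
  (forall j, PS_mult h h j <= r * h j) -> PS_pow h (S m) k <= r ^ m * h k.
Proof.
  intros h_ge0 r_ge0 h_sub; revert k; induction m as [|m IH]; intro k.
  - rewrite PS_pow_1; simpl; lra.
  - change (PS_mult h (PS_pow h (S m)) k <= r ^ S m * h k).
    apply Rle_trans with (PS_mult h (fun j => r ^ m * h j) k).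
    + assert (h_le : forall j, 0 <= h j <= h j) by (intro j; split; [apply h_ge0 | lra]).
      apply PS_mult_le_compat; intro j; [apply h_le|].
      split; [apply (PS_pow_le_compat h h), h_le | apply IH].
    + rewrite PS_mult_scal_r; change (r ^ S m) with (r * r ^ m).
      replace (r * r ^ m * h k) with (r ^ m * (r * h k)) by ring.
      apply Rmult_le_compat_l; [apply pow_le, r_ge0 | apply h_sub].
Qed.

Lemma PS_mult_INR u v k : INR k * PS_mult u v k =
  PS_mult (fun j => INR j * u j) v k + PS_mult u (fun j => INR j * v j) k.
Proof.
  unfold PS_mult; rewrite <- sum_plus, scal_sum; apply sum_eq; intros j Hj.
  rewrite minus_INR by exact Hj; ring.
Qed.

Lemma is_series_PS_mult p q y P Q : 0 <= y ->
  (forall k, 0 <= p k) -> (forall k, 0 <= q k) ->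
  is_series (fun k => p k * y ^ k) P -> is_series (fun k => q k * y ^ k) Q ->
  is_series (fun k => PS_mult p q k * y ^ k) (P * Q).
Proof.
  intros y_ge0 p_ge0 q_ge0 HP HQ.
  eapply is_series_ext; [|apply (is_series_mult_pos _ _ _ _ HP HQ)].
  - intro k; unfold PS_mult; rewrite Rmult_comm, scal_sum; apply sum_eq; intros j Hj.
    replace (y ^ k) with (y ^ j * y ^ (k - j)) by (rewrite <- pow_add; f_equal; lia).
    ring.
  - intro k; apply Rmult_le_pos; [apply p_ge0 | apply pow_le, y_ge0].
  - intro k; apply Rmult_le_pos; [apply q_ge0 | apply pow_le, y_ge0].
Qed.

Lemma is_series_PS_pow b y B m : 0 <= y -> (forall k, 0 <= b k) ->
  is_series (fun k => b k * y ^ k) B ->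
  is_series (fun k => PS_pow b (S m) k * y ^ k) (B ^ S m).
Proof.
  intros y_ge0 b_ge0 HB; induction m as [|m IH].
  - rewrite pow_1; eapply is_series_ext; [|exact HB].
    intro k; rewrite PS_pow_1; reflexivity.
  - apply (is_series_PS_mult b (PS_pow b (S m))); try assumption.
    intro k; apply (PS_pow_le_compat b b); intro j; pose proof (b_ge0 j); lra.
Qed.

Lemma is_series_sum_f_R0 (u : nat -> nat -> R) (l : nat -> R) N :
  (forall i, (i <= N)%nat -> is_series (u i) (l i)) ->
  is_series (fun k => sum_f_R0 (fun i => u i k) N) (sum_f_R0 l N).
Proof.
  induction N as [|N IH]; intro Hu; [apply Hu; lia|].
  apply (is_series_plus (fun k => sum_f_R0 (fun i => u i k) N) (u (S N))).
  - apply IH; intros; apply Hu; lia.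
  - apply Hu; lia.
Qed.

Lemma is_series_ge_first u l : (forall k, 0 <= u k) -> is_series u l -> u 0%nat <= l.
Proof.
  intros u_ge0 Hu; apply (sum_incr u 0 l); [apply is_series_Reals, Hu | exact u_ge0].
Qed.

Lemma ex_series_nonneg_inside a y : 0 <= y -> Rbar_lt y (CV_radius a) ->
  (forall k, 0 <= a k) -> ex_series (fun k => a k * y ^ k).
Proof.
  intros y_ge0 y_lt a_ge0.
  rewrite <- (Rabs_pos_eq y y_ge0) in y_lt.
  eapply ex_series_ext; [|apply (CV_disk_inside a y y_lt)].
  intro k; apply Rabs_pos_eq, Rmult_le_pos; [apply a_ge0 | apply pow_le, y_ge0].
Qed.

Lemma ex_series_INR_inside a y : 0 <= y -> Rbar_lt y (CV_radius a) ->
  (forall k, 0 <= a k) -> ex_series (fun k => INR k * a k * y ^ k).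
Proof.
  intros y_ge0 y_lt a_ge0.
  rewrite <- CV_radius_derive in y_lt.
  apply ex_series_incr_1.
  eapply ex_series_ext; [|apply (ex_series_scal y), (ex_series_nonneg_inside _ y y_ge0 y_lt)].
  - intro k; unfold PS_derive, scal; simpl; unfold mult; simpl; ring.
  - intro k; unfold PS_derive; apply Rmult_le_pos; [apply pos_INR | apply a_ge0].
Qed.

Lemma CV_radius_pos_of_pow_bound a A : 0 < A ->
  (forall k, 0 <= a k <= A ^ k) -> Rbar_lt 0 (CV_radius a).
Proof.
  intros A_pos a_le.
  assert (invA_pos : 0 < / A) by (apply Rinv_0_lt_compat, A_pos).
  assert (H : Rbar_le (/ A) (CV_radius a)).
  { apply (CV_radius_bounded a); exists 1; intro k.
    rewrite pow_inv, Rabs_pos_eq.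
    - apply (Rmult_le_reg_r (A ^ k)); [apply pow_lt, A_pos|].
      rewrite Rmult_assoc, Rinv_l, Rmult_1_l, Rmult_1_r by (apply pow_nonzero; lra).
      apply a_le.
    - apply Rmult_le_pos; [apply a_le | apply Rlt_le, Rinv_0_lt_compat, pow_lt, A_pos]. }
  destruct (CV_radius a); simpl in *; lra.
Qed.

Lemma sum_f_R0_nonneg (u : nat -> R) N :
  (forall i, (i <= N)%nat -> 0 <= u i) -> 0 <= sum_f_R0 u N.
Proof.
  intro u_ge0; rewrite <- (Rmult_0_l (INR (S N))), <- sum_cte.
  apply sum_Rle, u_ge0.
Qed.

(* [inv_sq 0 = 0], since [/ 0 = 0] in Rocq. *)
Definition inv_sq (j : nat) : R := / INR j ^ 2.

Lemma inv_sq_0 : inv_sq 0 = 0.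
Proof. unfold inv_sq; simpl; rewrite Rmult_0_l; apply Rinv_0. Qed.

Lemma inv_sq_nonneg j : 0 <= inv_sq j.
Proof.
  destruct j as [|j]; [rewrite inv_sq_0; lra|].
  apply Rlt_le, Rinv_0_lt_compat, pow_lt, lt_0_INR; lia.
Qed.

Lemma sum_inv_sq_le_2 N : sum_f_R0 inv_sq N <= 2.
Proof.
  assert (telescope : forall M, sum_f_R0 inv_sq (S M) + / INR (S M) <= 2).
  { induction M as [|M IH].
    - simpl; rewrite inv_sq_0; unfold inv_sq; simpl; lra.
    - rewrite tech5; unfold inv_sq at 2; rewrite S_INR.
      set (x := INR (S M)) in *.
      assert (x_pos : 0 < x) by (apply lt_0_INR; lia).
      assert (step : / x - / (x + 1) - / (x + 1) ^ 2 = / (x * (x + 1) ^ 2))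
        by (field; lra).
      assert (0 < / (x * (x + 1) ^ 2))
        by (apply Rinv_0_lt_compat, Rmult_lt_0_compat, pow_lt; lra).
      lra. }
  destruct N as [|N]; [simpl; rewrite inv_sq_0; lra|].
  pose proof (telescope N).
  assert (0 < / INR (S N)) by (apply Rinv_0_lt_compat, lt_0_INR; lia).
  lra.
Qed.

Lemma inv_sq_mul_le j k : (j <= k)%nat ->
  inv_sq j * inv_sq (k - j) <= 2 * inv_sq k * (inv_sq j + inv_sq (k - j)).
Proof.
  intro Hj.
  assert (rhs_ge0 : 0 <= 2 * inv_sq k * (inv_sq j + inv_sq (k - j))).
  { pose proof (inv_sq_nonneg k); pose proof (inv_sq_nonneg j);
    pose proof (inv_sq_nonneg (k - j)); apply Rmult_le_pos; lra. }
  destruct (Nat.eq_dec j 0) as [->|Hj0]; [rewrite inv_sq_0 in *; lra|].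
  destruct (Nat.eq_dec j k) as [->|Hjk];
    [rewrite Nat.sub_diag, inv_sq_0 in *; lra|].
  unfold inv_sq; rewrite (minus_INR k j Hj).
  assert (u_pos : 0 < INR j) by (apply lt_0_INR; lia).
  assert (v_pos : 0 < INR k - INR j) by (rewrite <- minus_INR by lia; apply lt_0_INR; lia).
  set (v := INR k - INR j) in *; set (u := INR j) in *.
  replace (INR k) with (u + v) by (unfold v, u; ring); clearbody u v.
  (* [1 / (u v) = (1/u + 1/v) / (u + v)] and [(1/u + 1/v)^2 <= 2 (1/u^2 + 1/v^2)]. *)
  assert (gap : 2 * / (u + v) ^ 2 * (/ u ^ 2 + / v ^ 2) - / u ^ 2 * / v ^ 2
                = (u - v) ^ 2 / ((u + v) ^ 2 * u ^ 2 * v ^ 2)) by (field; repeat split; lra).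
  assert (0 <= (u - v) ^ 2 / ((u + v) ^ 2 * u ^ 2 * v ^ 2)).
  { apply Rmult_le_pos; [apply pow2_ge_0|].
    apply Rlt_le, Rinv_0_lt_compat.
    apply Rmult_lt_0_compat; [apply Rmult_lt_0_compat|]; apply pow_lt; lra. }
  lra.
Qed.

Lemma inv_sq_conv_le k :
  sum_f_R0 (fun j => inv_sq j * inv_sq (k - j)) k <= 8 * inv_sq k.
Proof.
  apply Rle_trans with (sum_f_R0 (fun j => (inv_sq j + inv_sq (k - j)) * (2 * inv_sq k)) k).
  { apply sum_Rle; intros j Hj.
    rewrite (Rmult_comm _ (2 * inv_sq k)); apply inv_sq_mul_le, Hj. }
  rewrite <- scal_sum, sum_plus, (sum_f_R0_skip inv_sq).
  pose proof (sum_inv_sq_le_2 k); pose proof (inv_sq_nonneg k); nra.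
Qed.

Definition majorant (A : R) (k : nat) : R := A ^ k * inv_sq k / A.

Lemma majorant_nonneg A k : 0 < A -> 0 <= majorant A k.
Proof.
  intro A_pos; unfold majorant, Rdiv.
  apply Rmult_le_pos; [apply Rmult_le_pos; [apply pow_le; lra | apply inv_sq_nonneg]|].
  apply Rlt_le, Rinv_0_lt_compat, A_pos.
Qed.

Lemma PS_pow_majorant_le A m k : 0 < A -> PS_pow (majorant A) (S m) k <= (8 / A) ^ m * majorant A k.
Proof.
  intro A_pos; apply PS_pow_le_submult.
  - intro; apply majorant_nonneg, A_pos.
  - unfold Rdiv; apply Rmult_le_pos; [lra | apply Rlt_le, Rinv_0_lt_compat, A_pos].
  - intro j; unfold PS_mult.
    rewrite (sum_eq _ (fun i => inv_sq i * inv_sq (j - i) * (A ^ j / (A * A)))).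
    + rewrite <- scal_sum.
      replace (8 / A * majorant A j) with (A ^ j / (A * A) * (8 * inv_sq j))
        by (unfold majorant; field; lra).
      apply Rmult_le_compat_l; [|apply inv_sq_conv_le].
      unfold Rdiv; apply Rmult_le_pos; [apply pow_le; lra|].
      apply Rlt_le, Rinv_0_lt_compat, Rmult_lt_0_compat; exact A_pos.
    + intros i Hi; unfold majorant.
      replace (A ^ j) with (A ^ i * A ^ (j - i)) by (rewrite <- pow_add; f_equal; lia).
      field; lra.
Qed.

Lemma psd_mean_eq a y W M : W <> 0 ->
  is_series (fun k => a k * y ^ k) W ->
  is_series (fun k => INR k * a k * y ^ k) (M * W) ->
  psd_mean a y = M.
Proof.
  intros W_neq0 HW HM.
  unfold psd_mean, psd_prob, psd_omega; rewrite (is_series_unique _ _ HW).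
  apply is_series_unique; replace M with (M * W * / W) by (field; exact W_neq0).
  eapply is_series_ext; [|apply (is_series_scal_r (/ W) _ _ HM)].
  intro k; simpl; field; exact W_neq0.
Qed.

Lemma psd_var_eq a y W M S : W <> 0 ->
  is_series (fun k => a k * y ^ k) W ->
  is_series (fun k => INR k * a k * y ^ k) (M * W) ->
  is_series (fun k => INR k ^ 2 * a k * y ^ k) (S * W) ->
  psd_var a y = S - M ^ 2.
Proof.
  intros W_neq0 HW HM HS.
  unfold psd_var; rewrite (psd_mean_eq a y W M W_neq0 HW HM).
  unfold psd_prob, psd_omega; rewrite (is_series_unique _ _ HW).
  apply is_series_unique.
  pose proof (is_series_plus _ _ _ _
    (is_series_plus _ _ _ _ HS (is_series_scal_r (- 2 * M) _ _ HM))
    (is_series_scal_r (M ^ 2) _ _ HW)) as H.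
  replace (S - M ^ 2) with ((S * W + M * W * (- 2 * M) + W * M ^ 2) * / W)
    by (field; exact W_neq0).
  eapply is_series_ext; [|apply (is_series_scal_r (/ W) _ _ H)].
  intro k; unfold plus; simpl; field; exact W_neq0.
Qed.

Section LogDerivative.

Variables (a b : nat -> R) (y W B J : R).

Hypotheses (a_ge0 : forall k, 0 <= a k) (b_ge0 : forall k, 0 <= b k) (y_ge0 : 0 <= y).
Hypothesis log_deriv : forall k, INR k * a k = PS_mult b a k.
Hypotheses (HW : is_series (fun k => a k * y ^ k) W) (W_neq0 : W <> 0).
Hypotheses (HB : is_series (fun k => b k * y ^ k) B)
  (HJ : is_series (fun k => INR k * b k * y ^ k) J).

Lemma is_series_first_moment : is_series (fun k => INR k * a k * y ^ k) (B * W).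
Proof.
  eapply is_series_ext; [|apply (is_series_PS_mult b a y B W); assumption].
  intro k; rewrite log_deriv; reflexivity.
Qed.

Lemma psd_mean_log_deriv : psd_mean a y = B.
Proof. exact (psd_mean_eq a y W B W_neq0 HW is_series_first_moment). Qed.

Lemma psd_var_log_deriv : psd_var a y = J.
Proof.
  assert (INRa_ge0 : forall k, 0 <= INR k * a k)
    by (intro; apply Rmult_le_pos; [apply pos_INR | apply a_ge0]).
  assert (INRb_ge0 : forall k, 0 <= INR k * b k)
    by (intro; apply Rmult_le_pos; [apply pos_INR | apply b_ge0]).
  (* [k^2 a_k = k (b * a)_k = ((k b) * a)_k + (b * (k a))_k] *)
  assert (second_moment : is_series (fun k => INR k ^ 2 * a k * y ^ k) ((J + B ^ 2) * W)).
  { pose proof (is_series_plus _ _ _ _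
      (is_series_PS_mult (fun j => INR j * b j) a y J W y_ge0 INRb_ge0 a_ge0 HJ HW)
      (is_series_PS_mult b (fun j => INR j * a j) y B (B * W) y_ge0 b_ge0 INRa_ge0
         HB is_series_first_moment)) as H.
    replace ((J + B ^ 2) * W) with (plus (J * W) (B * (B * W))) by (unfold plus; simpl; ring).
    eapply is_series_ext; [|exact H]; intro k; unfold plus; simpl.
    rewrite <- Rmult_plus_distr_r, <- PS_mult_INR, <- log_deriv; ring. }
  rewrite (psd_var_eq a y W B (J + B ^ 2) W_neq0 HW is_series_first_moment second_moment).
  ring.
Qed.

End LogDerivative.

Section Coefficients.

Variables (c : nat -> R) (n : nat).

(* Coefficient of [y^k] in [B(y)^2 U(B(y))] when [B] has coefficients [f]. *)
Definition higher_coef (f : nat -> R) (k : nat) : R :=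
  sum_f_R0 (fun i => c i * PS_pow f (S (S i)) k) n.

Definition trunc_seq (k : nat) (f : nat -> R) (j : nat) : R :=
  if Nat.ltb j k then f j else 0.

Definition bcoef_step (f : nat -> R) (k : nat) : R :=
  match k with
  | O => 0
  | S O => 1
  | S k' => higher_coef (trunc_seq k f) k / INR k'
  end.

Definition bcoef : nat -> R := strong_rec bcoef_step.

Lemma bcoef_step_causal : causal bcoef_step.
Proof.
  intros f g k Hfg.
  assert (E : higher_coef (trunc_seq k f) k = higher_coef (trunc_seq k g) k).
  { apply sum_eq; intros i _; f_equal; apply PS_pow_ext_le; intros j _.
    unfold trunc_seq; destruct (Nat.ltb_spec j k); [apply Hfg | reflexivity]; assumption. }
  unfold bcoef_step; rewrite E; reflexivity.
Qed.

Lemma bcoef_0 : bcoef 0 = 0.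
Proof. unfold bcoef; rewrite strong_recE; [reflexivity | apply bcoef_step_causal]. Qed.

Lemma bcoef_1 : bcoef 1 = 1.
Proof. unfold bcoef; rewrite strong_recE; [reflexivity | apply bcoef_step_causal]. Qed.

Lemma bcoef_ode k : INR k * bcoef k = bcoef k + higher_coef bcoef k.
Proof.
  destruct k as [|[|k]].
  1, 2: unfold higher_coef; rewrite sum_eq_R0;
    [simpl; rewrite ?bcoef_0; ring | intros i _; rewrite PS_pow_lt; [ring | apply bcoef_0 | lia]].
  assert (E : higher_coef (trunc_seq (S (S k)) bcoef) (S (S k)) = higher_coef bcoef (S (S k))).
  { apply sum_eq; intros i _; f_equal; apply PS_pow_SS_ext_lt; [apply bcoef_0 | apply bcoef_0 |].
    intros j Hj; unfold trunc_seq; destruct (Nat.ltb_spec j (S (S k))); [reflexivity | lia]. }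
  unfold bcoef at 1 2; rewrite strong_recE by apply bcoef_step_causal; fold bcoef.
  change (bcoef_step bcoef (S (S k)))
    with (higher_coef (trunc_seq (S (S k)) bcoef) (S (S k)) / INR (S k)).
  rewrite E, S_INR; field; apply not_0_INR; lia.
Qed.

Definition acoef_step (g : nat -> R) (k : nat) : R :=
  match k with
  | O => 1
  | S _ => PS_mult bcoef g k / INR k
  end.

Definition acoef : nat -> R := strong_rec acoef_step.

Lemma acoef_step_causal : causal acoef_step.
Proof.
  intros f g [|k] Hfg; [reflexivity|]; unfold acoef_step; f_equal.
  apply sum_eq; intros [|j] Hj; [rewrite bcoef_0; ring|].
  rewrite Hfg by lia; reflexivity.
Qed.

Lemma acoef_0 : acoef 0 = 1.
Proof. unfold acoef; rewrite strong_recE; [reflexivity | apply acoef_step_causal]. Qed.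

Lemma acoef_log_deriv k : INR k * acoef k = PS_mult bcoef acoef k.
Proof.
  destruct k as [|k]; [unfold PS_mult; simpl; rewrite bcoef_0; ring|].
  unfold acoef at 1; rewrite strong_recE by apply acoef_step_causal; fold acoef.
  unfold acoef_step; field; apply not_0_INR; lia.
Qed.

Lemma acoef_1 : acoef 1 = 1.
Proof.
  pose proof (acoef_log_deriv 1) as H; unfold PS_mult in H; simpl in H.
  rewrite bcoef_0, bcoef_1, acoef_0 in H; lra.
Qed.

Hypothesis c_nonneg : forall i, (i <= n)%nat -> 0 <= c i.

Let A : R := 8 * (1 + sum_f_R0 c n).

Let sum_c_nonneg : 0 <= sum_f_R0 c n.
Proof. exact (sum_f_R0_nonneg c n c_nonneg). Qed.

Let A_ge_8 : 8 <= A.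
Proof. unfold A; lra. Qed.

Lemma higher_coef_le_majorant f k :
  (forall j, 0 <= f j <= majorant A j) -> 0 <= higher_coef f k <= majorant A k.
Proof.
  intro f_le.
  assert (ratio : 0 <= 8 / A <= 1).
  { split; [apply Rmult_le_pos; [lra | apply Rlt_le, Rinv_0_lt_compat; lra]|].
    apply (Rmult_le_reg_r A); [lra|]; unfold Rdiv.
    rewrite Rmult_assoc, Rinv_l by lra; lra. }
  assert (pow_f_le : forall i, 0 <= PS_pow f (S (S i)) k <= 8 / A * majorant A k).
  { intro i; pose proof (PS_pow_le_compat f (majorant A) (S (S i)) k f_le) as [H0 H1].
    pose proof (PS_pow_majorant_le A (S i) k ltac:(lra)).
    pose proof (pow_incr (8 / A) 1 i ratio); rewrite pow1 in *.
    pose proof (majorant_nonneg A k ltac:(lra)).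
    simpl pow in *; split; [exact H0|].
    apply Rle_trans with (8 / A * ((8 / A) ^ i * majorant A k)); [lra|].
    apply Rmult_le_compat_l; [lra|].
    rewrite <- (Rmult_1_l (majorant A k)) at 2; apply Rmult_le_compat_r; lra. }
  split.
  - apply sum_f_R0_nonneg; intros i Hi.
    apply Rmult_le_pos; [apply c_nonneg, Hi | apply pow_f_le].
  - apply Rle_trans with (sum_f_R0 (fun i => c i * (8 / A * majorant A k)) n).
    { apply sum_Rle; intros i Hi; apply Rmult_le_compat_l; [apply c_nonneg, Hi | apply pow_f_le]. }
    (* The constant [A] is chosen so that [8 / A * (c_0 + ... + c_n) <= 1]. *)
    rewrite <- scal_sum.
    replace (8 / A * majorant A k * sum_f_R0 c n)
      with (sum_f_R0 c n / (1 + sum_f_R0 c n) * majorant A k) by (unfold A; field; lra).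
    rewrite <- (Rmult_1_l (majorant A k)) at 2.
    apply Rmult_le_compat_r; [apply majorant_nonneg; lra|].
    apply (Rmult_le_reg_r (1 + sum_f_R0 c n)); [lra|]; unfold Rdiv.
    rewrite Rmult_assoc, Rinv_l by lra; lra.
Qed.

Lemma bcoef_bound : forall k, 0 <= bcoef k <= majorant A k.
Proof.
  apply (strong_rec_ind bcoef_step bcoef_step_causal (fun k v => 0 <= v <= majorant A k)).
  intros f [|[|k]] Hf.
  - unfold majorant; rewrite inv_sq_0; simpl; unfold Rdiv; rewrite Rmult_0_r, Rmult_0_l; lra.
  - unfold majorant, inv_sq; simpl; split; [lra|]; right; field; lra.
  - change (bcoef_step f (S (S k)))
      with (higher_coef (trunc_seq (S (S k)) f) (S (S k)) / INR (S k)).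
    assert (trunc_le : forall j, 0 <= trunc_seq (S (S k)) f j <= majorant A j).
    { intro j; unfold trunc_seq; destruct (Nat.ltb_spec j (S (S k))); [apply Hf; assumption|].
      pose proof (majorant_nonneg A j ltac:(lra)); lra. }
    pose proof (higher_coef_le_majorant _ (S (S k)) trunc_le) as [H0 H1].
    assert (k_ge1 : 1 <= INR (S k)) by (apply (le_INR 1); lia).
    assert (inv_k : 0 < / INR (S k) <= 1).
    { split; [apply Rinv_0_lt_compat; lra|]; rewrite <- Rinv_1; apply Rinv_le_contravar; lra. }
    unfold Rdiv; split; nra.
Qed.

Lemma acoef_bound : forall k, 0 <= acoef k <= A ^ k.
Proof.
  apply (strong_rec_ind acoef_step acoef_step_causal (fun k v => 0 <= v <= A ^ k)).
  intros f [|k] Hf; [simpl; lra|].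
  change (acoef_step f (S k)) with (PS_mult bcoef f (S k) / INR (S k)).
  assert (term_le : forall j, (j <= S k)%nat ->
            0 <= bcoef j * f (S k - j)%nat <= inv_sq j * A ^ k).
  { intros [|j] Hj; [rewrite bcoef_0, inv_sq_0; lra|].
    pose proof (bcoef_bound (S j)) as Hb; pose proof (Hf (S k - S j)%nat ltac:(lia)) as Hfj.
    replace (inv_sq (S j) * A ^ k) with (majorant A (S j) * A ^ (S k - S j)).
    - split; [apply Rmult_le_pos|apply Rmult_le_compat]; apply Hb || apply Hfj.
    - unfold majorant; replace (A ^ k) with (A ^ (S k) / A) by (simpl; field; lra).
      replace (S k) with (S j + (S k - S j))%nat at 2 by lia; rewrite pow_add; field; lra. }
  assert (conv : 0 <= PS_mult bcoef f (S k) <= 2 * A ^ k).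
  { split; [apply sum_f_R0_nonneg; intros j Hj; apply term_le, Hj|].
    apply Rle_trans with (sum_f_R0 (fun j => inv_sq j * A ^ k) (S k)).
    - apply sum_Rle; intros j Hj; apply term_le, Hj.
    - rewrite <- scal_sum, Rmult_comm; apply Rmult_le_compat_r;
        [apply pow_le; lra | apply sum_inv_sq_le_2]. }
  assert (k_ge1 : 1 <= INR (S k)) by (apply (le_INR 1); lia).
  assert (inv_k : 0 < / INR (S k) <= 1).
  { split; [apply Rinv_0_lt_compat; lra|]; rewrite <- Rinv_1; apply Rinv_le_contravar; lra. }
  pose proof (pow_le A k ltac:(lra)).
  simpl pow; unfold Rdiv; split; nra.
Qed.

Lemma bcoef_le_INR_acoef k : bcoef k <= INR k * acoef k.
Proof.
  rewrite acoef_log_deriv; destruct k as [|k].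
  - unfold PS_mult; simpl; rewrite bcoef_0; lra.
  - unfold PS_mult; rewrite tech5, Nat.sub_diag, acoef_0.
    assert (0 <= sum_f_R0 (fun j => bcoef j * acoef (S k - j)) k).
    { apply cond_pos_sum; intro j; apply Rmult_le_pos; [apply bcoef_bound | apply acoef_bound]. }
    lra.
Qed.

Lemma psd_generator_acoef : psd_generator acoef.
Proof.
  split; [intro k; apply acoef_bound|split].
  - apply (CV_radius_pos_of_pow_bound acoef A); [lra | apply acoef_bound].
  - exists 0%nat, 1%nat; rewrite acoef_0, acoef_1; repeat split; lra || lia.
Qed.

Lemma is_series_INR_bcoef (y B : R) : 0 <= y -> is_series (fun k => bcoef k * y ^ k) B ->
  is_series (fun k => INR k * bcoef k * y ^ k) (B * (1 + B * poly_eval c n B)).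
Proof.
  intros y_ge0 HB.
  assert (b_ge0 : forall k, 0 <= bcoef k) by (intro; apply bcoef_bound).
  assert (higher : is_series (fun k => higher_coef bcoef k * y ^ k)
                     (sum_f_R0 (fun i => c i * B ^ S (S i)) n)).
  { eapply is_series_ext;
      [|apply (is_series_sum_f_R0 (fun i k => c i * (PS_pow bcoef (S (S i)) k * y ^ k)))].
    - intro k; unfold higher_coef; symmetry; rewrite Rmult_comm, scal_sum.
      apply sum_eq; intros; ring.
    - intros i _; rewrite (Rmult_comm (c i)).
      eapply is_series_ext; [|apply is_series_scal_r, is_series_PS_pow; eassumption].
      intro k; apply Rmult_comm. }
  replace (B * (1 + B * poly_eval c n B)) with (plus B (sum_f_R0 (fun i => c i * B ^ S (S i)) n)).
  - eapply is_series_ext; [|apply (is_series_plus _ _ _ _ HB higher)].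
    intro k; unfold plus; simpl; rewrite bcoef_ode; ring.
  - unfold plus, poly_eval; simpl.
    rewrite Rmult_plus_distr_l, Rmult_1_r, <- Rmult_assoc, scal_sum; f_equal.
    apply sum_eq; intros; simpl; ring.
Qed.

Lemma psd_mean_var_acoef y : 0 < y -> Rbar_lt y (CV_radius acoef) ->
  let B := Series (fun k => bcoef k * y ^ k) in
  psd_mean acoef y = B /\ psd_var acoef y = B * (1 + B * poly_eval c n B).
Proof.
  intros y_pos y_lt B.
  set (W := Series (fun k => acoef k * y ^ k)).
  assert (a_ge0 : forall k, 0 <= acoef k) by (intro; apply acoef_bound).
  assert (b_ge0 : forall k, 0 <= bcoef k) by (intro; apply bcoef_bound).
  assert (pow_ge0 : forall k, 0 <= y ^ k) by (intro; apply pow_le; lra).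
  assert (HW : is_series (fun k => acoef k * y ^ k) W)
    by (apply Series_correct, ex_series_nonneg_inside; lra || assumption).
  assert (HB : is_series (fun k => bcoef k * y ^ k) B).
  { apply Series_correct.
    apply (@ex_series_le R_AbsRing R_CompleteNormedModule _ (fun k => INR k * acoef k * y ^ k));
      [|apply ex_series_INR_inside; lra || assumption].
    intro k; change (norm (bcoef k * y ^ k)) with (Rabs (bcoef k * y ^ k)).
    rewrite Rabs_pos_eq by (apply Rmult_le_pos; [apply b_ge0 | apply pow_ge0]).
    apply Rmult_le_compat_r; [apply pow_ge0 | apply bcoef_le_INR_acoef]. }
  assert (W_ge1 : 1 <= W).
  { pose proof (is_series_ge_first _ _ (fun k => Rmult_le_pos _ _ (a_ge0 k) (pow_ge0 k)) HW) as H.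
    cbv beta in H; rewrite acoef_0 in H; simpl in H; lra. }
  pose proof (is_series_INR_bcoef y B ltac:(lra) HB) as HJ.
  split.
  - apply (psd_mean_log_deriv acoef bcoef y W B); (assumption || lra || apply acoef_log_deriv).
  - apply (psd_var_log_deriv acoef bcoef y W B); (assumption || lra || apply acoef_log_deriv).
Qed.

End Coefficients.

Theorem corollary2 (c : nat -> R) (n : nat) :
  (forall i : nat, (i <= n)%nat -> 0 <= c i) ->
  is_psd_covariance (fun x => x * (1 + x * poly_eval c n x)).
Proof.
  intro c_nonneg.
  exists (acoef c n); split; [exact (psd_generator_acoef c n c_nonneg)|].
  intros y y_pos y_lt.
  destruct (psd_mean_var_acoef c n c_nonneg y y_pos y_lt) as [-> ->].
  reflexivity.
Qed.
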